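(* Let $G$ be a group with finite generating set $A$, and let $\varphi:L_\Sigma\to G$ be a bijection from a regular language $L_\Sigma\subseteq\Sigma^*$ over some finite alphabet $\Sigma$ such that for each $a\in A$ the relation $\{(\varphi^{-1}(g),\varphi^{-1}(ga)) : g\in G\}$ is FA-recognizable. Let $h_\varphi(n)=\max\{d_A(\varphi(w)) : w\in L_\Sigma, |w|\le n\}$. If $h_\varphi\preceq f$ for some $f\in\mathfrak{F}$, then $G\in\mathcal{B}_{\tilde f}$, where $\tilde f=f+\mathfrak{i}$.
   Context: $\mathfrak{i}(n)=n$; $d_A$ is the word metric on $G$ and $d_A(g)=d_A(e,g)$. A relation $R\subseteq(\Sigma^* )^2$ is FA-recognizable if the language of convolutions $u\otimes v$ (parallel readings of $u,v$ with the shorter padded by a new symbol $\diamond$) is regular. $\mathfrak{F}$ is the set of nondecreasing functions from some interval $[Q,\infty)\cap\mathbb{N}$ to the nonnegative reals; $g\preceq f$ means there exist $N\ge0$ and positive integers $K,M$ with $g(n)\le Kf(Mn)$ for all $n\ge N$. With $S=A\cup A^{-1}$ and $\pi:S^*\to G$ the evaluation map, a Cayley automatic representation is such a bijection $\psi:L\to G$ with $L\subseteq S^*$ (i.e., over the alphabet $S$); its function is $h(n)=\max\{d_A(\pi(w),\psi(w)): w\in L,|w|\le n\}$, and $G\in\mathcal{B}_f$ means some Cayley automatic representation over $S$ (for some finite generating set; this is independent of the choice) has $h\preceq f$. *)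

From Stdlib Require Import Reals ClassicalEpsilon.
From HB Require Import structures.
From mathcomp Require Import all_boot.

Set Implicit Arguments.
Unset Strict Implicit.
Unset Printing Implicit Defensive.

Record group := Group {
  carrier :> Type;
  gmul : carrier -> carrier -> carrier;
  ginv : carrier -> carrier;
  gone : carrier;
  gmulA : forall x y z, gmul x (gmul y z) = gmul (gmul x y) z;
  gmul1 : forall x, gmul gone x = x;
  gmulV : forall x, gmul (ginv x) x = gone }.

Definition pbool (P : Prop) : bool :=
  if excluded_middle_informative P then true else false.

(* a letter (a, true) stands for a, (a, false) for a^{-1} *)
Definition eval_word (G : group) (w : seq (G * bool)) : G :=
  foldr (fun p acc => gmul (if p.2 then p.1 else ginv p.1) acc) (gone G) w.

Definition is_A_word (G : group) (A : seq G) (w : seq (G * bool)) : Prop :=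
  List.Forall (fun p => List.In p.1 A) w.

Definition generates (G : group) (A : seq G) : Prop :=
  forall g : G, exists w, is_A_word A w /\ eval_word w = g.

Definition word_len_le (G : group) (A : seq G) (g : G) (n : nat) : Prop :=
  exists w, is_A_word A w /\ (size w <= n)%N /\ eval_word w = g.

(* d_A(g): length of a shortest word over A ∪ A^{-1} representing g
   (0 if none exists, which cannot happen when A generates G) *)
Definition dA (G : group) (A : seq G) (g : G) : nat :=
  match excluded_middle_informative
          (exists n, (fun m => pbool (word_len_le A g m)) n) with
  | left H => @ex_minn (fun m => pbool (word_len_le A g m)) H
  | right _ => 0%N
  end.

Definition dist (G : group) (A : seq G) (x y : G) : nat :=
  dA A (gmul (ginv x) y).

Record dfa (Sigma : finType) := DFA {
  dstate : finType;
  dstart : dstate;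
  dfinal : pred dstate;
  dtrans : dstate -> Sigma -> dstate }.

Definition accepts (Sigma : finType) (D : dfa Sigma) (w : seq Sigma) : bool :=
  dfinal (foldl (@dtrans _ D) (dstart D) w).

Definition regular (Sigma : finType) (L : seq Sigma -> Prop) : Prop :=
  exists D : dfa Sigma, forall w, L w <-> accepts D w.

(* convolution u ⊗ v; None plays the role of the padding symbol ◇ *)
Definition conv (Sigma : finType) (u v : seq Sigma) : seq (option Sigma * option Sigma) :=
  [seq (nth None (map Some u) i, nth None (map Some v) i)
  | i <- iota 0 (maxn (size u) (size v))].

Definition FA_recognizable (Sigma : finType) (R : seq Sigma -> seq Sigma -> Prop) : Prop :=
  regular (fun x => exists u v, R u v /\ x = conv u v).

Definition bij_on (Sigma : finType) (G : group) (L : seq Sigma -> Prop)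
    (phi : seq Sigma -> G) : Prop :=
  (forall u v, L u -> L v -> phi u = phi v -> u = v) /\
  (forall g : G, exists w, L w /\ phi w = g).

Definition right_mult_rel (Sigma : finType) (G : group) (L : seq Sigma -> Prop)
    (phi : seq Sigma -> G) (a : G) : seq Sigma -> seq Sigma -> Prop :=
  fun u v => L u /\ L v /\ phi v = gmul (phi u) a.

Definition automatic_rep (Sigma : finType) (G : group) (A : seq G)
    (L : seq Sigma -> Prop) (phi : seq Sigma -> G) : Prop :=
  regular L /\ bij_on L phi /\
  forall a, List.In a A -> FA_recognizable (right_mult_rel L phi a).

(* max { F w : w in L, |w| <= n }  (0 if the set is empty) *)
Definition h_fun (Sigma : finType) (L : seq Sigma -> Prop) (F : seq Sigma -> nat)
    (n : nat) : nat :=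
  \max_(k < n.+1) \max_(t : k.-tuple Sigma | pbool (L t)) F t.

Definition inF (Q : nat) (f : nat -> R) : Prop :=
  (forall n, (Q <= n)%N -> Rle 0 (f n)) /\
  (forall n m, (Q <= n)%N -> (n <= m)%N -> Rle (f n) (f m)).

Definition preceq (g f : nat -> R) : Prop :=
  exists N K M : nat, (0 < K)%N /\ (0 < M)%N /\
    forall n, (N <= n)%N -> Rle (g n) (Rmult (INR K) (f (M * n)%N)).

Definition eval_sym (Sigma : finType) (G : group) (s : Sigma -> G) (w : seq Sigma) : G :=
  foldr (fun x acc => gmul (s x) acc) (gone G) w.

(* G ∈ B_f: for some finite generating set A, with alphabet S = A ∪ A^{-1}
   (realised as a finite type Sigma injected into G by s with image exactly
   A ∪ A^{-1}), some Cayley automatic representation ψ : L -> G, L ⊆ S^*,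
   has h(n) = max{ d_A(π(w), ψ(w)) : w ∈ L, |w| <= n } ≼ f. *)
Definition B_class (G : group) (f : nat -> R) : Prop :=
  exists A : seq G, generates A /\
  exists (Sigma : finType) (s : Sigma -> G),
    injective s /\
    (forall x, exists a, List.In a A /\ (s x = a \/ s x = ginv a)) /\
    (forall a, List.In a A -> (exists x, s x = a) /\ (exists x, s x = ginv a)) /\
    exists (L : seq Sigma -> Prop) (psi : seq Sigma -> G),
      automatic_rep A L psi /\
      preceq (fun n => INR (h_fun L (fun w => dist A (eval_sym s w) (psi w)) n)) f.

(* Take the generating set A1 = A ∪ {1} and the alphabet S = A1 ∪ A1^-1.  Replace each
   letter of Sigma by a one-hot block of constant length over two distinct letters of S
   (the letter 1 and some generator a <> 1; adding 1 guarantees two letters even when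
   A ∪ A^-1 has only one, as for Z/2).  An injective block code of constant length maps
   regular languages to regular languages and commutes with convolution, so transporting
   phi along it keeps every right-multiplication relation FA-recognizable, while the new
   generator 1 contributes the diagonal relation.  Since pi w is a product of |w| letters,
   d(pi w, psi w) <= |w| + d(phi u) for w the code of u, and |u| <= |w|; hence the new
   function is at most n + h_phi(n), which is bounded by a multiple of f + i.  The trivial
   group is represented by the empty word alone. *)

From Pilot Require Import Defs.
From Stdlib Require Import Reals Lra Classical ClassicalEpsilon.
From HB Require Import structures.
From mathcomp Require Import all_boot.

Set Implicit Arguments.
Unset Strict Implicit.
Unset Printing Implicit Defensive.

Lemma pboolP (P : Prop) : pbool P = true <-> P.
Proof. by rewrite /pbool; case: excluded_middle_informative. Qed.

Section GroupTheory.
Variable G : group.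
Implicit Types x y : G.

Lemma gmulVr x : gmul x (ginv x) = gone G.
Proof.
rewrite -[LHS]gmul1 -(gmulV (ginv x)) -gmulA [gmul (ginv x) (gmul x _)]gmulA.
by rewrite gmulV gmul1.
Qed.

Lemma gmulr1 x : gmul x (gone G) = x.
Proof. by rewrite -(gmulV x) gmulA gmulVr gmul1. Qed.

Lemma ginvK x : ginv (ginv x) = x.
Proof. by rewrite -[RHS]gmul1 -(gmulV (ginv x)) -gmulA gmulV gmulr1. Qed.

Lemma ginvM x y : ginv (gmul x y) = gmul (ginv y) (ginv x).
Proof.
have inv_yx : gmul (gmul (ginv y) (ginv x)) (gmul x y) = gone G.
  by rewrite -gmulA [gmul (ginv x) _]gmulA gmulV gmul1 gmulV.
by rewrite -[RHS]gmulr1 -(gmulVr (gmul x y)) gmulA inv_yx gmul1.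
Qed.

Lemma ginv1 : ginv (gone G) = gone G.
Proof. by rewrite -[LHS]gmulr1 gmulV. Qed.

End GroupTheory.

Section WordMetric.
Variables (G : group) (A : seq G).

Lemma eval_word_cat (w1 w2 : seq (G * bool)) :
  eval_word (w1 ++ w2) = gmul (eval_word w1) (eval_word w2).
Proof. by elim: w1 => [|p w1 IH] /=; rewrite ?gmul1 // IH gmulA. Qed.

Lemma word_len_le_mul g h m k :
  word_len_le A g m -> word_len_le A h k -> word_len_le A (gmul g h) (m + k).
Proof.
move=> [w1 [A_w1 [le_w1 <-]]] [w2 [A_w2 [le_w2 <-]]].
exists (w1 ++ w2); split; first by apply/List.Forall_app.
by rewrite size_cat leq_add // eval_word_cat.
Qed.

Lemma is_A_word_sub (A' : seq G) w : (forall a, List.In a A -> List.In a A') ->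
  is_A_word A w -> is_A_word A' w.
Proof. by move=> sAA'; apply: List.Forall_impl => p; apply: sAA'. Qed.

Lemma word_len_le_sub (A' : seq G) g m : (forall a, List.In a A -> List.In a A') ->
  word_len_le A g m -> word_len_le A' g m.
Proof. by move=> sAA' [w [/(is_A_word_sub sAA') A_w lew]]; exists w. Qed.

Lemma dA_le g n : word_len_le A g n -> dA A g <= n.
Proof.
move=> gn; rewrite /dA; case: excluded_middle_informative => // ex.
by case: ex_minnP => m _; apply; apply/pboolP.
Qed.

Lemma dA_word g : generates A -> word_len_le A g (dA A g).
Proof.
move=> genA; rewrite /dA; case: excluded_middle_informative => [ex|nex].
  by case: ex_minnP => m /pboolP.
case: nex; have [w [A_w <-]] := genA g.
by exists (size w); apply/pboolP; exists w.
Qed.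

Lemma eval_word_trivial w : is_A_word A w ->
  (forall a, List.In a A -> a = gone G) -> eval_word w = gone G.
Proof.
move=> A_w A1; elim: A_w => //= -[a b] w' /A1 /= -> _ ->.
by case: b; rewrite ?ginv1 gmul1.
Qed.

Lemma generates_nontrivial g : generates A -> g <> gone G ->
  exists2 a, List.In a A & a <> gone G.
Proof.
move=> genA g1; apply: NNPP => nA; apply: g1.
have [w [A_w <-]] := genA g; apply: (eval_word_trivial A_w) => a Aa.
by apply: NNPP => a1; apply: nA; exists a.
Qed.

End WordMetric.

Lemma generates_sub (G : group) (A A' : seq G) : (forall a, List.In a A -> List.In a A') ->
  generates A -> generates A'.
Proof.
by move=> sAA' genA g; have [w [/(is_A_word_sub sAA') A_w ew]] := genA g; exists w.
Qed.

Lemma dA_sub (G : group) (A A' : seq G) g : (forall a, List.In a A -> List.In a A') ->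
  generates A -> dA A' g <= dA A g.
Proof. by move=> sAA' genA; apply/dA_le/(word_len_le_sub sAA')/dA_word. Qed.

Definition sym_alphabet (G : group) (A : seq G) (S : finType) (s : S -> G) : Prop :=
  [/\ injective s,
      forall x, exists a, List.In a A /\ (s x = a \/ s x = ginv a) &
      forall a, List.In a A -> (exists x, s x = a) /\ (exists x, s x = ginv a)].

Section SymbolWords.
Variables (G : group) (A : seq G) (S : finType) (s : S -> G).
Hypothesis s_letter : forall x, exists a, List.In a A /\ (s x = a \/ s x = ginv a).

Lemma word_len_le_inv_eval_sym w : word_len_le A (ginv (eval_sym s w)) (size w).
Proof.
elim: w => [|x w IH] /=.
  by exists [::]; split; [constructor | rewrite ginv1].
rewrite ginvM -addn1; apply: word_len_le_mul IH _.
have [a [Aa [-> | ->]]] := s_letter x.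
  by exists [:: (a, false)]; split; [constructor | rewrite /= gmulr1].
by exists [:: (a, true)]; split; [constructor | rewrite /= gmulr1 ginvK].
Qed.

Lemma dist_eval_sym_le w g : generates A -> Defs.dist A (eval_sym s w) g <= size w + dA A g.
Proof.
by move=> genA; apply/dA_le/word_len_le_mul; [apply: word_len_le_inv_eval_sym | apply: dA_word].
Qed.

End SymbolWords.

Lemma In_nth_lt (T : Type) (x0 : T) (s : seq T) i : i < size s -> List.In (nth x0 s i) s.
Proof. by elim: s i => [|x s IH] [|i] //= lti; [left | right; apply: IH]. Qed.

Lemma In_nth_ex (T : Type) (x0 : T) (s : seq T) x : List.In x s ->
  exists2 i, i < size s & nth x0 s i = x.
Proof.
elim: s => [|y s IH] //= [-> | /IH [i lti <-]]; first by exists 0.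
by exists i.+1.
Qed.

Section ListAlphabet.
Variables (G : group) (l : seq G).

(* [G] has no decidable equality with which to deduplicate [l]; a letter is instead the
   index of a first occurrence in [l]. *)
Definition first_occurrence (i : 'I_(size l)) : bool :=
  pbool (forall j, j < i -> nth (gone G) l j <> nth (gone G) l i).

Definition list_alphabet : finType := {i : 'I_(size l) | first_occurrence i}.

Definition list_letter (x : list_alphabet) : G := nth (gone G) l (val (val x)).

Lemma list_letter_inj : injective list_letter.
Proof.
move=> [i fst_i] [j fst_j]; rewrite /list_letter /= => eij.
apply/val_inj/val_inj => /=.
move/pboolP: fst_i => fst_i; move/pboolP: fst_j => fst_j.
by case: (ltngtP i j) => // [/fst_j | /fst_i]; [|rewrite eij].
Qed.

Lemma list_letter_In x : List.In (list_letter x) l.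
Proof. exact: (In_nth_lt _ (ltn_ord (val x))). Qed.

Lemma list_letter_surj g : List.In g l -> exists x, list_letter x = g.
Proof.
move=> lg; have [i lti ei] := In_nth_ex (gone G) lg.
have ex : exists i, pbool (i < size l /\ nth (gone G) l i = g).
  by exists i; apply/pboolP.
case: (ex_minnP ex) => m /pboolP [ltm em] min_m.
have fst_m : first_occurrence (Ordinal ltm).
  apply/pboolP => j /= ltjm ej.
  have : m <= j by apply: min_m; apply/pboolP; split; [apply: ltn_trans ltm | rewrite ej].
  by rewrite leqNgt ltjm.
by exists (exist _ (Ordinal ltm) fst_m).
Qed.

End ListAlphabet.

Lemma sym_alphabet_exists (G : group) (A : seq G) :
  exists (S : finType) (s : S -> G), sym_alphabet A s.
Proof.
exists (list_alphabet (A ++ map (@ginv G) A)), (@list_letter _ _).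
split; first exact: list_letter_inj.
  move=> x; case/List.in_app_iff: (list_letter_In x) => [Ax | /List.in_map_iff [a [<- Aa]]].
    by exists (list_letter x); split => //; left.
  by exists a; split => //; right.
move=> a Aa; split; apply: list_letter_surj; apply/List.in_app_iff; first by left.
by right; apply: List.in_map.
Qed.

Section Convolution.
Variable S : finType.
Implicit Types u v a b : seq S.

Lemma conv_cons x y u v : conv (x :: u) (y :: v) = (Some x, Some y) :: conv u v.
Proof. by rewrite /conv /= maxnSS /= -[1]addn0 iotaDl -map_comp. Qed.

Lemma conv_nil_l v : conv [::] v = [seq (None, Some y) | y <- v].
Proof.
rewrite (map_comp (pair None) Some) -[in RHS](mkseq_nth None (map Some v)) /conv max0n size_map.
by rewrite -map_comp; apply: eq_map => i; rewrite /= nth_nil.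
Qed.

Lemma conv_nil_r u : conv u [::] = [seq (Some x, None) | x <- u].
Proof.
rewrite (map_comp (pair^~ None) Some) -[in RHS](mkseq_nth None (map Some u)) /conv maxn0 size_map.
by rewrite -map_comp; apply: eq_map => i; rewrite /= nth_nil.
Qed.

Lemma conv_cat a b u v : size a = size b -> conv (a ++ u) (b ++ v) = conv a b ++ conv u v.
Proof.
elim: a b => [|x a IH] [|y b] //= [eqab].
by rewrite !conv_cons IH.
Qed.

Lemma conv_eq_size a b : size a = size b -> conv a b = zip (map Some a) (map Some b).
Proof. by elim: a b => [|x a IH] [|y b] //= [eqab]; rewrite conv_cons IH. Qed.

End Convolution.

Lemma zip_nseql (T U : Type) (a : T) (s : seq U) m : size s = m ->
  zip (nseq m a) s = map (pair a) s.
Proof. by move=> <-; elim: s => //= b s ->. Qed.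

Lemma zip_nseqr (T U : Type) (a : U) (s : seq T) m : size s = m ->
  zip s (nseq m a) = map (pair^~ a) s.
Proof. by move=> <-; elim: s => //= b s ->. Qed.

Definition block_code (X Y : Type) (code : X -> seq Y) (u : seq X) : seq Y :=
  flatten (map code u).

Definition image_lang (X Y : Type) (e : X -> Y) (P : X -> Prop) : Y -> Prop :=
  fun y => exists x, P x /\ y = e x.

Lemma regular_ext (S : finType) (P P' : seq S -> Prop) :
  (forall w, P w <-> P' w) -> regular P -> regular P'.
Proof. by move=> PP' [D PD]; exists D => w; rewrite -PP'. Qed.

Lemma regular_nil (S : finType) : regular (fun w : seq S => w = [::]).
Proof.
exists (@DFA S bool true id (fun _ _ => false)) => -[|y w]; rewrite /accepts //=.
by have -> : foldl (fun _ _ => false) false w = false by elim: w.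
Qed.

Lemma take_succ_eq_rcons (T : eqType) (s p : seq T) k y : k < size s ->
  (take k.+1 s == rcons p y) = (take k s == p) && (onth s k == Some y).
Proof. by move=> lt_ks; rewrite (take_nth y) // eqseq_rcons onthE (nth_map y). Qed.

Section BlockCode.
Variables (X Y : finType) (n : nat) (code : X -> seq Y).
Hypotheses (size_code : forall x, size (code x) = n.+1) (code_inj : injective code).

Lemma size_block_code u : size (block_code code u) = n.+1 * size u.
Proof. by elim: u => [|x u IH] /=; rewrite ?muln0 // size_cat IH size_code mulnS. Qed.

Lemma block_code_inj : injective (block_code code).
Proof.
move=> u v euv.
have esz : size u = size v.
  by apply/eqP; rewrite -(eqn_pmul2l (ltn0Sn n)) -!size_block_code euv.
elim: u v euv esz => [|x u IH] [|y v] // euv [esz].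
have ecode := congr1 (take n.+1) euv; have erest := congr1 (drop n.+1) euv.
rewrite /= !take_size_cat ?size_code // in ecode.
rewrite /= !drop_size_cat ?size_code // in erest.
by rewrite (code_inj ecode) (IH _ erest esz).
Qed.

Definition code_prefixed (p : seq Y) : {set X} := [set x | take (size p) (code x) == p].

Lemma code_prefixed_nil : code_prefixed [::] = setT.
Proof. by apply/setP => x; rewrite !inE take0. Qed.

Lemma code_prefixed_rcons p y : size p <= n ->
  [set x in code_prefixed p | onth (code x) (size p) == Some y] = code_prefixed (rcons p y).
Proof.
by move=> le_pn; apply/setP => x; rewrite !inE size_rcons take_succ_eq_rcons // size_code.
Qed.

Section Automaton.
Variable D : dfa X.

(* After reading [block_code code u ++ p] with [size p <= n], the state records the
   run of [D] on [u], the length of [p], and the letters whose code extends [p]. *)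
Definition block_state : finType := option (dstate D * 'I_n.+1 * {set X}).

Definition block_step (st : block_state) (y : Y) : block_state :=
  if st is Some (q, k, C) then
    let C' := [set x in C | onth (code x) k == Some y] in
    if (k : nat) == n then omap (fun x => (dtrans q x, ord0, setT)) [pick x in C']
    else Some (q, inord k.+1, C')
  else None.

Definition block_final (st : block_state) : bool :=
  if st is Some (q, k, _) then ((k : nat) == 0) && dfinal q else false.

Definition block_dfa : dfa Y := DFA (Some (dstart D, ord0, setT)) block_final block_step.

Lemma block_run_prefix q p : size p <= n ->
  foldl block_step (Some (q, ord0, setT)) p = Some (q, inord (size p), code_prefixed p).
Proof.
elim/last_ind: p => [_ | p y IH].
  by rewrite code_prefixed_nil; congr (Some (_, _, _)); apply: ord_inj; rewrite inordK.
rewrite size_rcons => lt_pn.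
rewrite foldl_rcons (IH (ltnW lt_pn)) /block_step (inordK (ltnW lt_pn)) (ltn_eqF lt_pn).
by rewrite code_prefixed_rcons // ltnW.
Qed.

Lemma block_run_code q x :
  foldl block_step (Some (q, ord0, setT)) (code x) = Some (dtrans q x, ord0, setT).
Proof.
have [p [y ecode]] : exists p y, code x = rcons p y.
  by case/lastP: (code x) (size_code x) => // p y _; exists p, y.
have size_p : size p = n by apply/eqP; rewrite -eqSS -(size_rcons p y) -ecode size_code.
rewrite ecode foldl_rcons block_run_prefix ?size_p // /block_step inordK // eqxx.
have -> : [set x' in code_prefixed p | onth (code x') n == Some y] = [set x].
  rewrite -size_p code_prefixed_rcons ?size_p //.
  apply/setP => x'; rewrite !inE -ecode take_oversize ?size_code //.
  by apply/eqP/eqP => [/code_inj | ->].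
by case: pickP => [x' | /(_ x)]; rewrite ?inE ?eqxx // => /eqP ->.
Qed.

Lemma block_run_block_code q u :
  foldl block_step (Some (q, ord0, setT)) (block_code code u) =
  Some (foldl (@dtrans _ D) q u, ord0, setT).
Proof. by elim: u q => [|x u IH] q //=; rewrite foldl_cat block_run_code IH. Qed.

Lemma block_run_inv q0 w q k C :
  foldl block_step (Some (q0, ord0, setT)) w = Some (q, k, C) ->
  exists u p, [/\ w = block_code code u ++ p, size p = k, q = foldl (@dtrans _ D) q0 u
                & C = code_prefixed p].
Proof.
elim/last_ind: w q k C => [|w y IH] q k C.
  by case=> <- <- <-; exists [::], [::]; rewrite code_prefixed_nil.
rewrite foldl_rcons.
case ew: foldl => [[[q1 k1] C1]|] //.
have [u [p [-> size_p -> ->]]] := IH _ _ _ ew.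
have le_pn : size p <= n by rewrite -ltnS size_p.
rewrite /block_step -size_p code_prefixed_rcons //.
case: eqP => [eq_pn | ne_pn].
  case: pickP => // x; rewrite inE => /eqP ecode [<- <- <-].
  rewrite take_oversize ?size_code ?size_rcons ?eq_pn // in ecode.
  exists (rcons u x), [::]; rewrite code_prefixed_nil foldl_rcons; split => //.
  by rewrite cats0 -!cats1 /block_code map_cat flatten_cat /= cats0 ecode -cats1 catA.
case=> <- <- <-; exists u, (rcons p y).
have lt_pn : size p < n by rewrite ltn_neqAle le_pn andbT; apply/eqP.
by split; rewrite ?rcons_cat // inordK // size_rcons.
Qed.

End Automaton.

Lemma regular_block_image P : regular P -> regular (image_lang (block_code code) P).
Proof.
move=> [D PD]; exists (block_dfa D) => w; split.
  by move=> [u [Pu ->]]; rewrite /accepts /= block_run_block_code /=; apply/PD.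
rewrite /accepts /=; case ew: foldl => [[[q k] C]|] //= /andP [/eqP k0 fin_q].
have [u [p [-> size_p eq_q _]]] := block_run_inv ew.
exists u; split; first by apply/PD; rewrite /accepts -eq_q.
by move: size_p; rewrite k0 => /size0nil ->; rewrite cats0.
Qed.

Definition pad_code (o : option X) : seq (option Y) :=
  if o is Some x then map Some (code x) else nseq n.+1 None.

Definition conv_code (p : option X * option X) : seq (option Y * option Y) :=
  zip (pad_code p.1) (pad_code p.2).

Lemma size_pad_code o : size (pad_code o) = n.+1.
Proof. by case: o => [x|]; rewrite ?size_map ?size_nseq. Qed.

Lemma size_conv_code p : size (conv_code p) = n.+1.
Proof. by rewrite size_zip !size_pad_code minnn. Qed.

Lemma conv_code_inj : injective conv_code.
Proof.
have pad_inj : injective pad_code.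
  move=> [x|] [x'|] //=.
  - by move/(inj_map (fun _ _ => @Some_inj _ _ _))/code_inj ->.
  - by case: (code x) (size_code x).
  - by case: (code x') (size_code x').
move=> [o1 o2] [o1' o2']; rewrite /conv_code /= => eo.
have := congr1 unzip1 eo; have := congr1 unzip2 eo.
by rewrite !unzip1_zip ?unzip2_zip ?size_pad_code // => /pad_inj -> /pad_inj ->.
Qed.

Lemma conv_block_code_nil_l v :
  conv [::] (block_code code v) = block_code conv_code (conv [::] v).
Proof.
rewrite !conv_nil_l; elim: v => //= y v IH; rewrite map_cat IH; congr (_ ++ _).
by rewrite /conv_code (@zip_nseql _ _ None (map Some (code y)) n.+1) ?size_map // -map_comp.
Qed.

Lemma conv_block_code_nil_r u :
  conv (block_code code u) [::] = block_code conv_code (conv u [::]).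
Proof.
rewrite !conv_nil_r; elim: u => //= x u IH; rewrite map_cat IH; congr (_ ++ _).
by rewrite /conv_code (@zip_nseqr _ _ None (map Some (code x)) n.+1) ?size_map // -map_comp.
Qed.

Lemma conv_block_code u v :
  conv (block_code code u) (block_code code v) = block_code conv_code (conv u v).
Proof.
elim: u v => [|x u IH] [|y v]; first by [].
- exact: conv_block_code_nil_l.
- exact: conv_block_code_nil_r.
rewrite conv_cons /= conv_cat ?size_code // IH conv_eq_size ?size_code //.
Qed.

End BlockCode.

Lemma conv_diag (S : finType) (w : seq S) :
  conv w w = block_code (fun y => [:: (Some y, Some y)]) w.
Proof. by elim: w => //= y w IH; rewrite conv_cons IH. Qed.

Section OneHot.
Variables (X Y : finType) (z0 z1 : Y).
Hypothesis z01 : z0 != z1.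

Definition one_hot (x : X) : seq Y :=
  mkseq (fun j => if j == enum_rank x :> nat then z1 else z0) #|X|.+1.

Lemma size_one_hot x : size (one_hot x) = #|X|.+1.
Proof. exact: size_mkseq. Qed.

Lemma one_hot_inj : injective one_hot.
Proof.
move=> x x' /(congr1 (nth z0 ^~ (enum_rank x))).
rewrite !nth_mkseq ?ltnS 1?ltnW // eqxx.
case: eqP => [/val_inj/enum_rank_inj // | _ e10].
by move: z01; rewrite e10 eqxx.
Qed.

End OneHot.

Section Transport.
Variables (G : group) (X Y : finType) (e : seq X -> seq Y).
Hypothesis e_inj : injective e.
Variables (L : seq X -> Prop) (phi : seq X -> G).

(* Off the image of [e] the value [gone G] is arbitrary. *)
Definition transport (w : seq Y) : G :=
  match excluded_middle_informative (exists u, w = e u) with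
  | left ex => phi (proj1_sig (constructive_indefinite_description _ ex))
  | right _ => gone G
  end.

Lemma transportE u : transport (e u) = phi u.
Proof.
rewrite /transport; case: excluded_middle_informative => [ex | []]; last by exists u.
by case: constructive_indefinite_description => u' /= /e_inj ->.
Qed.

Lemma image_langE u : image_lang e L (e u) <-> L u.
Proof. by split => [[u' [Lu' /e_inj ->]] | Lu]; last exists u. Qed.

Lemma bij_on_transport : bij_on L phi -> bij_on (image_lang e L) transport.
Proof.
move=> [phi_inj phi_surj]; split.
  by move=> _ _ [u [Lu ->]] [v [Lv ->]]; rewrite !transportE => /(phi_inj _ _ Lu Lv) ->.
move=> g; have [u [Lu <-]] := phi_surj g.
by exists (e u); rewrite transportE image_langE.
Qed.

Lemma right_mult_rel_transport a u v :
  right_mult_rel (image_lang e L) transport a (e u) (e v) <-> right_mult_rel L phi a u v.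
Proof. by rewrite /right_mult_rel !image_langE !transportE. Qed.

End Transport.

Lemma FA_recognizable_mul1 (G : group) (S : finType) (L : seq S -> Prop) (phi : seq S -> G) :
  regular L -> bij_on L phi -> FA_recognizable (right_mult_rel L phi (gone G)).
Proof.
move=> regL [phi_inj _].
have diag_size : forall y : S, size [:: (Some y, Some y)] = 1 by [].
have diag_inj : injective (fun y : S => [:: (Some y, Some y)]) by move=> y y' [].
apply: regular_ext (regular_block_image diag_size diag_inj regL) => x; split.
  by move=> [w [Lw ->]]; exists w, w; rewrite conv_diag /right_mult_rel gmulr1.
move=> [u [v [[Lu [Lv]]]]]; rewrite gmulr1 => /(phi_inj _ _ Lv Lu) -> ->.
by exists u; rewrite conv_diag.
Qed.

Section BlockRepresentation.
Variables (G : group) (X Y : finType) (n : nat) (code : X -> seq Y).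
Hypotheses (size_code : forall x, size (code x) = n.+1) (code_inj : injective code).
Variables (L : seq X -> Prop) (phi : seq X -> G).

Lemma FA_recognizable_block a : FA_recognizable (right_mult_rel L phi a) ->
  FA_recognizable (right_mult_rel (image_lang (block_code code) L)
                                  (transport (block_code code) phi) a).
Proof.
have E_inj := block_code_inj size_code code_inj.
move=> /(regular_block_image (size_conv_code size_code) (conv_code_inj size_code code_inj)) reg.
apply: regular_ext reg => x; split.
  move=> [_ [[u [v [Ruv ->]]] ->]]; exists (block_code code u), (block_code code v).
  by rewrite (right_mult_rel_transport E_inj) (conv_block_code size_code).
move=> [w1 [w2 [Rw ->]]]; case: (Rw) => [[u [_ eu]] [[v [_ ev]] _]]; subst.
move/(right_mult_rel_transport E_inj): Rw => Ruv.
by exists (conv u v); rewrite (conv_block_code size_code); split => //; exists u, v.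
Qed.

Lemma automatic_rep_block (A : seq G) : automatic_rep A L phi ->
  automatic_rep (gone G :: A) (image_lang (block_code code) L) (transport (block_code code) phi).
Proof.
have E_inj := block_code_inj size_code code_inj.
move=> [regL [bijL recL]].
have regL' := regular_block_image size_code code_inj regL.
have bijL' := bij_on_transport E_inj bijL.
split=> //; split=> // a [<- | Aa]; first exact: FA_recognizable_mul1.
exact/FA_recognizable_block/recL.
Qed.

End BlockRepresentation.

Lemma automatic_rep_trivial (G : group) (A : seq G) (S : finType) :
  (forall g : G, g = gone G) -> automatic_rep A (fun w : seq S => w = [::]) (fun _ => gone G).
Proof.
move=> trivG; have regL := regular_nil S.
have bijL : bij_on (fun w : seq S => w = [::]) (fun _ => gone G).
  by split=> [u v -> -> // | g]; exists [::]; rewrite [g]trivG.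
by split=> //; split=> // a _; rewrite [a]trivG; apply: FA_recognizable_mul1.
Qed.

Lemma leq_h_fun (S : finType) (L : seq S -> Prop) (F : seq S -> nat) u n :
  L u -> size u <= n -> F u <= h_fun L F n.
Proof.
move=> Lu le_un; apply: leq_trans (leq_bigmax (Ordinal (le_un : size u < n.+1))).
exact: (leq_bigmax_cond (in_tuple u) (proj2 (pboolP _) Lu)).
Qed.

Lemma h_fun_le (S : finType) (L : seq S -> Prop) (F : seq S -> nat) n m :
  (forall w, L w -> size w <= n -> F w <= m) -> h_fun L F n <= m.
Proof.
move=> Fm; apply/bigmax_leqP => k _; apply/bigmax_leqP => t /pboolP Lt.
by apply: Fm; rewrite // size_tuple -ltnS.
Qed.

Lemma h_fun_image_le (X Y : finType) (e : seq X -> seq Y) (L : seq X -> Prop)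
    (F : seq X -> nat) (F' : seq Y -> nat) n :
  (forall u, size u <= size (e u)) -> (forall u, L u -> F' (e u) <= size (e u) + F u) ->
  h_fun (image_lang e L) F' n <= n + h_fun L F n.
Proof.
move=> le_e F'F; apply: h_fun_le => _ [u [Lu ->]] le_n.
by apply: leq_trans (F'F _ Lu) _; rewrite leq_add // leq_h_fun // (leq_trans (le_e u)).
Qed.

Lemma preceq_add_id (Q : nat) (f : nat -> R) (h h' : nat -> nat) : inF Q f ->
  preceq (fun n => INR (h n)) f -> (forall n, h' n <= n + h n) ->
  preceq (fun n => INR (h' n)) (fun n => Rplus (f n) (INR n)).
Proof.
move=> [f_ge0 _] [N [K [M [K_gt0 [M_gt0 hf]]]]] hh'.
exists (maxn N Q), K, M; split => //; split => // n; rewrite geq_max => /andP [le_Nn le_Qn].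
have fMn_ge0 : Rle 0 (f (M * n)%N) by apply/f_ge0/(leq_trans le_Qn)/leq_pmull.
have h'_le : Rle (INR (h' n)) (INR n + INR (h n)).
  by rewrite -plus_INR; apply/le_INR/leP.
have n_le : Rle (INR n) (INR K * INR (M * n)%N).
  by rewrite -mult_INR; apply/le_INR/leP/(leq_trans (leq_pmull _ M_gt0))/leq_pmull.
have := hf n le_Nn; rewrite Rmult_plus_distr_l; lra.
Qed.

Definition cayley_rep_le (G : group) (A : seq G) (S : finType) (s : S -> G)
    (b : nat -> nat) : Prop :=
  exists (L : seq S -> Prop) (psi : seq S -> G), automatic_rep A L psi /\
    forall n, h_fun L (fun w => Defs.dist A (eval_sym s w) (psi w)) n <= b n.

Section CayleyRepresentation.
Variables (G : group) (A : seq G) (Sigma : finType) (L : seq Sigma -> Prop)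
  (phi : seq Sigma -> G) (S : finType) (s : S -> G).

Lemma cayley_rep_le_trivial (b : nat -> nat) :
  (forall g : G, g = gone G) -> cayley_rep_le (gone G :: A) s b.
Proof.
move=> trivG; exists (fun w => w = [::]), (fun _ => gone G).
split=> [|n]; first exact: automatic_rep_trivial.
apply/(leq_trans _ (leq0n (b n)))/h_fun_le => w _ _.
by apply: dA_le; exists [::]; rewrite [gmul _ _]trivG; split; first constructor.
Qed.

Hypotheses (genA : generates A) (rep : automatic_rep A L phi).
Hypothesis s_letter : forall x, exists a, List.In a (gone G :: A) /\ (s x = a \/ s x = ginv a).

Lemma cayley_rep_le_one_hot (z0 z1 : S) : z0 != z1 ->
  cayley_rep_le (gone G :: A) s (fun n => n + h_fun L (fun w => dA A (phi w)) n).
Proof.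
move=> z01; have size_code := size_one_hot (X := Sigma) z0 z1.
have code_inj := one_hot_inj (X := Sigma) z01.
pose E := block_code (one_hot (X := Sigma) z0 z1).
exists (image_lang E L), (transport E phi); split; first exact: automatic_rep_block.
move=> n; apply: h_fun_image_le => u; first by rewrite (size_block_code size_code) leq_pmull.
have sub_A : forall a, List.In a A -> List.In a (gone G :: A) by right.
move=> Lu; rewrite transportE; last exact: block_code_inj size_code code_inj.
apply: leq_trans (dist_eval_sym_le _ _ _ (generates_sub sub_A genA)) _ => //.
by rewrite leq_add2l; apply: dA_sub.
Qed.

End CayleyRepresentation.

Theorem mainTheorem9 (G : group) (A : seq G) (hA : generates A)
  (Sigma : finType) (L : seq Sigma -> Prop) (phi : seq Sigma -> G)
  (hL : regular L) (hphi : bij_on L phi)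
  (hrec : forall a, List.In a A -> FA_recognizable (right_mult_rel L phi a))
  (Q : nat) (f : nat -> R) (hf : inF Q f)
  (hh : preceq (fun n => INR (h_fun L (fun w => dA A (phi w)) n)) f) :
  B_class G (fun n => Rplus (f n) (INR n)).
Proof.
have rep : automatic_rep A L phi by [].
have sub_A1 : forall a, List.In a A -> List.In a (gone G :: A) by right.
have [S [s [s_inj s_letter s_sym]]] := sym_alphabet_exists (gone G :: A).
exists (gone G :: A); split; first exact: generates_sub sub_A1 hA.
exists S, s; do 3!split => //.
suff [L' [psi [rep' h'_le]]] :
    cayley_rep_le (gone G :: A) s (fun n => n + h_fun L (fun w => dA A (phi w)) n).
  by exists L', psi; split => //; apply: preceq_add_id hf hh h'_le.
case: (classic (forall g : G, g = gone G)) => [trivG | /not_all_ex_not [g0 g0_1]].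
  exact: cayley_rep_le_trivial.
have [a0 Aa0 a0_1] := generates_nontrivial hA g0_1.
have [[z0 ez0] _] := s_sym _ (or_introl erefl).
have [[z1 ez1] _] := s_sym _ (sub_A1 _ Aa0).
apply: (cayley_rep_le_one_hot hA rep s_letter (z0 := z0) (z1 := z1)).
by apply/eqP => ez; apply: a0_1; rewrite -ez1 -ez ez0.
Qed.
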